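(* Let $K\ge 2$, $\mathcal{X}\subseteq\mathbb{R}^d$, let $(X,Y)$ be a random pair on $\mathcal{X}\times\mathbb{R}$ with $X$-marginal $P_X$, let $f_k(\cdot;\theta_k):\mathcal{X}\to\mathbb{R}$ ($k=1,\dots,K$, $\theta=(\theta_1,\dots,\theta_K)$) be expert maps and $a(\cdot;\phi)=(a_1(\cdot;\phi),\dots,a_K(\cdot;\phi))$ router logits. Assume: (i) (uniform margin tail) there exist $C_{\mathrm{mt}}>0$ and $\alpha>0$ such that for all admissible router parameters $\phi$ and all $t>0$, $\mathbb{P}(\Delta(X;\phi)\le t)\le C_{\mathrm{mt}}t^\alpha$; (ii) (uniform boundedness) there exist $B_Y,B_f>0$ with $|Y|\le B_Y$ almost surely and $|f_k(x;\theta_k)|\le B_f$ for all $k$, all $x\in\mathcal{X}$ and all admissible $\theta_k$. Then (the hard argmax being unique $P_X$-a.s.) there is a constant $C_{\mathrm{sh}}>0$ depending only on $K,C_{\mathrm{mt}},\alpha,B_Y,B_f$ such that for all $\tau\in(0,1]$ and all admissible $(\theta,\phi)$, \[|L_\tau(\theta,\phi)-L_0(\theta,\phi)|\le C_{\mathrm{sh}}\tau^\alpha.\] In particular $L_\tau\to L_0$ uniformly on compact parameter sets with rate $O(\tau^\alpha)$.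
   Context: For $\tau>0$ the softmax router weights are $p_k^{(\tau)}(x;\phi)=\exp(a_k(x;\phi)/\tau)/\sum_{j=1}^K\exp(a_j(x;\phi)/\tau)$, the soft predictor is $h_{\theta,\phi,\tau}(x)=\sum_k p_k^{(\tau)}(x;\phi)f_k(x;\theta_k)$, and the soft risk is $L_\tau(\theta,\phi)=\mathbb{E}[(Y-h_{\theta,\phi,\tau}(X))^2]$. With ordered logits $a_{(1)}(x;\phi)\ge a_{(2)}(x;\phi)\ge\cdots$, the top-two margin is $\Delta(x;\phi)=a_{(1)}(x;\phi)-a_{(2)}(x;\phi)$. The hard winner is $k^\star(x;\phi)=\min\arg\max_k a_k(x;\phi)$, the hard predictor is $h_{\theta,\phi,0}(x)=f_{k^\star(x;\phi)}(x;\theta_{k^\star(x;\phi)})$, and the hard risk is $L_0(\theta,\phi)=\mathbb{E}[(Y-h_{\theta,\phi,0}(X))^2]$. *)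

From HB Require Import structures.
From mathcomp Require Import all_boot all_order all_algebra.
From mathcomp Require Import all_classical all_reals all_analysis.
Set Implicit Arguments. Unset Strict Implicit. Unset Printing Implicit Defensive.
Import Order.TTheory GRing.Theory Num.Theory.
Local Open Scope ring_scope.

Section MoE.
Variable R : realType.
Variable K : nat.

(* hard winner k*(x;phi) = min argmax_k a_k (smallest index among maximizers);
   None can only happen when K = 0. *)
Definition is_argmax (a : 'I_K -> R) (k : 'I_K) : bool := [forall j, a j <= a k].

Definition hard_winner (a : 'I_K -> R) : option 'I_K :=
  [pick k | is_argmax a k && [forall j, is_argmax a j ==> (k <= j)%N]].

(* ordered logits: a_(1) = max_k a_k, a_(2) = largest logit among the indices
   other than the hard winner (the second order statistic). The seed
   \min_k a_k is a lower bound of all logits, so it does not affect the max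
   as soon as K >= 2. *)
Definition logit_min (a : 'I_K -> R) (k0 : 'I_K) : R := \big[Num.min/a k0]_k a k.

Definition top_margin (a : 'I_K -> R) : R :=
  match hard_winner a with
  | Some ks => a ks - \big[Num.max/logit_min a ks]_(k | k != ks) a k
  | None => 0
  end.

Definition softmax (tau : R) (a : 'I_K -> R) (k : 'I_K) : R :=
  expR (a k / tau) / \sum_j expR (a j / tau).

End MoE.

Section Predictors.
Variable R : realType.
Variable K : nat.
Variables (Xs Theta Phi : Type).
Variable f : 'I_K -> Theta -> Xs -> R.
Variable a : 'I_K -> Phi -> Xs -> R.

Definition soft_pred (tau : R) (theta : 'I_K -> Theta) (phi : Phi) (x : Xs) : R :=
  \sum_k softmax tau (fun j => a j phi x) k * f k (theta k) x.

Definition hard_pred (theta : 'I_K -> Theta) (phi : Phi) (x : Xs) : R :=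
  match hard_winner (fun j => a j phi x) with
  | Some ks => f ks (theta ks) x
  | None => 0
  end.

Definition margin (phi : Phi) (x : Xs) : R := top_margin (fun j => a j phi x).
End Predictors.

Local Open Scope ereal_scope.
Definition sq_risk {R : realType} {d} {T : measurableType d}
  (P : probability T R) {Xs : Type} (X : T -> Xs) (Y : T -> R) (h : Xs -> R) : \bar R :=
  \int[P]_w (((Y w - h (X w)) ^+ 2)%R)%:E.

From HB Require Import structures.
From mathcomp Require Import all_boot all_order all_algebra.
From mathcomp Require Import all_classical all_reals all_analysis.
From mathcomp Require Import lra ring measurable_realfun.
Set Implicit Arguments. Unset Strict Implicit. Unset Printing Implicit Defensive.
Import Order.TTheory GRing.Theory Num.Theory.
Local Open Scope ring_scope.
Local Open Scope classical_set_scope.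

(* If the hard winner beats every other logit by the margin D, each losing
   softmax weight is at most exp(-D/tau), so the soft and hard predictions
   differ by at most 2 K Bf exp(-D/tau); the square loss being Lipschitz on
   bounded values, the two risks differ by a constant times E[exp(-D/tau)].
   This exponential moment is O(tau^alpha) by the margin tail: on the shell
   n w tau < D <= (n+1) w tau, with w = alpha + 1, the integrand is at most
   exp(-n w) while the shell has probability at most Cmt ((n+1) w tau)^alpha,
   and (n+1)^alpha <= exp(n alpha) makes the series summable; the shells
   beyond a large N contribute at most tau^alpha. *)

Section softmax.
Variables (R : realType) (K : nat) (tau : R) (b : 'I_K -> R).

Lemma softmax_ge0 k : 0 <= softmax tau b k.
Proof. by rewrite divr_ge0 ?expR_ge0 ?sumr_ge0 // => j _; exact: expR_ge0. Qed.

Lemma sum_expR_gt0 (k : 'I_K) : 0 < \sum_j expR (b j / tau).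
Proof.
by rewrite (bigD1 k) //= ltr_pwDl ?expR_gt0 // sumr_ge0 // => j _; exact: expR_ge0.
Qed.

Lemma sum_softmax (k0 : 'I_K) : \sum_k softmax tau b k = 1.
Proof. by rewrite -mulr_suml divff // gt_eqF // (sum_expR_gt0 k0). Qed.

Lemma softmax_le_expR k l : softmax tau b k <= expR ((b k - b l) / tau).
Proof.
rewrite /softmax mulrBl expRB ler_wpM2l ?expR_ge0 //.
rewrite lef_pV2 ?posrE ?expR_gt0 ?(sum_expR_gt0 l) //.
by rewrite (bigD1 l) //= lerDl sumr_ge0 // => j _; exact: expR_ge0.
Qed.

Lemma norm_softmax_comb_le (B : R) (v : 'I_K -> R) (k0 : 'I_K) :
  (forall k, `|v k| <= B) -> `|\sum_k softmax tau b k * v k| <= B.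
Proof.
move=> v_le; rewrite -[B]mul1r -(sum_softmax k0) mulr_suml.
apply: le_trans (ler_norm_sum _ _ _) (ler_sum _ _) => k _.
by rewrite normrM ger0_norm ?softmax_ge0 // ler_wpM2l ?softmax_ge0.
Qed.

End softmax.

Section hard_winner.
Variables (R : realType) (K : nat) (b : 'I_K -> R).

Lemma hard_winner_SomeE k : (hard_winner b == Some k) =
  is_argmax b k && [forall j, is_argmax b j ==> (k <= j)%N].
Proof.
rewrite /hard_winner; case: pickP => [k' /andP[am' min']|none]; last first.
  by rewrite none.
apply/eqP/andP => [[<-]|[am min]]; first by [].
congr Some; apply/val_inj/eqP; rewrite eqn_leq.
by rewrite (implyP (forallP min' k) am) (implyP (forallP min k') am').
Qed.

Lemma hard_winner_argmax k : hard_winner b = Some k -> is_argmax b k.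
Proof. by move/eqP; rewrite hard_winner_SomeE => /andP[]. Qed.

Lemma hard_winner_exists : (0 < K)%N -> exists k, hard_winner b = Some k.
Proof.
move=> K_gt0; have [k1 _ k1_max] := arg_maxP b (isT : predT (Ordinal K_gt0)).
have am1 : is_argmax b k1 by apply/forallP => j; exact: k1_max.
have [k am k_min] := arg_minnP (fun k : 'I_K => val k) am1.
exists k; apply/eqP; rewrite hard_winner_SomeE am /=.
by apply/forallP => j; apply/implyP; exact: k_min.
Qed.

Lemma top_margin_ge0 : 0 <= top_margin b.
Proof.
rewrite /top_margin; case E: hard_winner => [ks|//].
have /forallP ks_max := hard_winner_argmax E.
rewrite subr_ge0 bigmax_le // /logit_min.
exact: bigmin_le_id.
Qed.

Lemma le_top_margin ks k : hard_winner b = Some ks -> k != ks ->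
  b k <= b ks - top_margin b.
Proof.
by move=> E k_ks; rewrite /top_margin E opprB addrCA subrr addr0 le_bigmax_cond.
Qed.

Lemma dist_soft_hard_le (tau B : R) (v : 'I_K -> R) ks : 0 < tau ->
  (forall k, `|v k| <= B) -> hard_winner b = Some ks ->
  `|\sum_k softmax tau b k * v k - v ks| <= K%:R * (2 * B) * expR (- top_margin b / tau).
Proof.
move=> tau_gt0 v_le E.
have B_ge0 : 0 <= B := le_trans (normr_ge0 _) (v_le ks).
have -> : v ks = \sum_k softmax tau b k * v ks.
  by rewrite -mulr_suml (sum_softmax _ _ ks) mul1r.
rewrite -sumrB -mulrA mulr_natl -[K in _ *+ K]card_ord -sumr_const.
apply: le_trans (ler_norm_sum _ _ _) (ler_sum _ _) => k _.
rewrite -mulrBr normrM ger0_norm ?softmax_ge0 //.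
have [->|k_ks] := eqVneq k ks.
  by rewrite subrr normr0 mulr0 !mulr_ge0 ?expR_ge0.
rewrite mulrC ler_pM ?softmax_ge0 //.
  by rewrite mulr2n mulrDl mul1r (le_trans (ler_normB _ _)) ?lerD.
apply: le_trans (softmax_le_expR _ _ _ ks) _.
rewrite ler_expR ler_pM2r ?invr_gt0 //.
by have := le_top_margin E k_ks; lra.
Qed.

End hard_winner.

Section measurable_big.
Context {d d'} {T : measurableType d} {V : measurableType d'}.
Variables (op : V -> V -> V) (I : Type) (s : seq I) (P : pred I).
Hypothesis mop : forall f g : T -> V, measurable_fun setT f ->
  measurable_fun setT g -> measurable_fun setT (fun x => op (f x) (g x)).

Lemma measurable_fun_big (F : I -> T -> V) (x0 : T -> V) :
  measurable_fun setT x0 -> (forall i, measurable_fun setT (F i)) ->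
  measurable_fun setT (fun x => \big[op/x0 x]_(i <- s | P i) F i x).
Proof.
move=> mx0 mF; elim: s => [|i s' IH].
  by under eq_fun do rewrite big_nil.
under eq_fun do rewrite big_cons.
by case: (P i) => //; exact: mop.
Qed.

End measurable_big.

Section measurable_logits.
Context {d} {T : measurableType d} {R : realType} {K : nat}.
Variable a : 'I_K -> T -> R.
Hypothesis ma : forall j, measurable_fun setT (a j).

Lemma measurable_forall (p : 'I_K -> T -> bool) :
  (forall j, measurable_fun setT (p j)) ->
  measurable_fun setT (fun x => [forall j, p j x]).
Proof.
move=> mp; have -> : (fun x => [forall j, p j x]) = (fun x => \big[andb/true]_j p j x).
  by apply/funext => x; rewrite big_andE.
by apply: measurable_fun_big => // f g; exact: measurable_and.
Qed.

Lemma measurable_is_argmax k :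
  measurable_fun setT (fun x => is_argmax (fun j => a j x) k).
Proof. by apply: measurable_forall => j; exact: measurable_fun_ler. Qed.

Lemma measurable_hard_winner_eq k :
  measurable_fun setT (fun x => hard_winner (fun j => a j x) == Some k).
Proof.
under eq_fun do rewrite hard_winner_SomeE.
apply: measurable_and; first exact: measurable_is_argmax.
apply: measurable_forall => j; under eq_fun do rewrite implybE.
by apply: measurable_or; [exact/measurable_neg/measurable_is_argmax|].
Qed.

Lemma measurable_hard_select (g : 'I_K -> T -> R) :
  (forall k, measurable_fun setT (g k)) ->
  measurable_fun setT (fun x => if hard_winner (fun j => a j x) is Some k
                                then g k x else 0).
Proof.
move=> mg; have -> : (fun x => if hard_winner (fun j => a j x) is Some k
                                then g k x else 0) =
  (fun x => \sum_k (if hard_winner (fun j => a j x) == Some k then g k x else 0)).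
  apply/funext => x; case: hard_winner => [k|]; last by rewrite big1.
  rewrite (bigD1 k) //= eqxx big1 ?addr0 // => j.
  by rewrite eq_sym => /negbTE; rewrite -(inj_eq Some_inj) => ->.
apply: measurable_sum => k.
by apply: measurable_fun_ifT => //; exact: measurable_hard_winner_eq.
Qed.

Lemma measurable_top_margin :
  measurable_fun setT (fun x => top_margin (fun j => a j x)).
Proof.
apply: measurable_hard_select => k; apply: measurable_funB => //.
apply: measurable_fun_big => //; first by move=> f g; exact: measurable_maxr.
by apply: measurable_fun_big => // f g; exact: measurable_minr.
Qed.

(* The log-sum-exp form avoids needing measurability of inversion. *)
Lemma measurable_softmax tau k :
  measurable_fun setT (fun x => softmax tau (fun j => a j x) k).
Proof.
have mexp j : measurable_fun setT (fun x => expR (a j x / tau)).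
  by apply: measurableT_comp => //; exact: measurable_funM.
have -> : (fun x => softmax tau (fun j => a j x) k) =
    (fun x => expR (a k x / tau) * expR (- ln (\sum_j expR (a j x / tau)))).
  by apply/funext => x; rewrite /softmax expRN lnK // posrE (sum_expR_gt0 _ _ k).
apply: measurable_funM => //; apply: measurableT_comp => //.
apply: measurableT_comp => //; apply: measurableT_comp => //.
exact: measurable_sum.
Qed.

End measurable_logits.

Section shells.
Variable R : realType.

Lemma expRN_le_shells (tau w D : R) N : 0 < tau -> 0 <= D ->
  expR (- D / tau) <=
    \sum_(n < N) expR (- (n%:R * w)) * (D <= n.+1%:R * w * tau)%R%:R
    + expR (- (N%:R * w)).
Proof.
move=> tau_gt0 D_ge0; elim: N => [|N IH].
  rewrite big_ord0 add0r mul0r oppr0 expR0 -expR0 ler_expR mulNr oppr_le0.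
  exact: divr_ge0 D_ge0 (ltW tau_gt0).
rewrite big_ord_recr /= -addrA.
have [D_le|D_gt] := boolP (D <= N.+1%:R * w * tau).
  apply: le_trans IH _; rewrite mulr1 lerD2l lerDl; exact: expR_ge0.
rewrite mulr0n mulr0 add0r -[X in X <= _]add0r; apply: lerD.
- by rewrite sumr_ge0 // => n _; rewrite mulr_ge0 ?expR_ge0.
- rewrite ler_expR mulNr lerN2 ler_pdivlMr //.
  by rewrite ltW // ltNge.
Qed.

Lemma powR_natS_le_expR (alpha : R) n : 0 <= alpha ->
  n.+1%:R `^ alpha <= expR (n%:R * alpha).
Proof.
move=> alpha_ge0; rewrite expRM ge0_ler_powR ?nnegrE ?expR_ge0 //.
by rewrite -natr1 addrC expR_ge1Dx.
Qed.

Lemma sum_expRN_le2 N : \sum_(n < N) expR (- n%:R) <= 2 :> R.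
Proof.
set q := expR (-1) : R.
have q_le : q <= 2^-1.
  rewrite /q expRN lef_pV2 ?posrE ?expR_gt0 //.
  by have := expR_ge1Dx (1 : R); lra.
have q_ge0 : 0 <= q := expR_ge0 _.
under eq_bigr do rewrite -mulN1r expRM_natr -/q.
have := subrX1 q N; have := exprn_ge0 N q_ge0.
have : 0 <= \sum_(n < N) q ^+ n by rewrite sumr_ge0 // => n _; exact: exprn_ge0.
set S := \sum_(_ < _) _; nra.
Qed.

Lemma shell_sum_le (C alpha tau : R) N : 0 <= C -> 0 <= alpha -> 0 <= tau ->
  \sum_(n < N) expR (- (n%:R * (alpha + 1))) * (C * (n.+1%:R * (alpha + 1) * tau) `^ alpha)
  <= 2 * C * (alpha + 1) `^ alpha * tau `^ alpha.
Proof.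
move=> C_ge0 alpha_ge0 tau_ge0.
have w_ge0 : 0 <= alpha + 1 by lra.
set c := C * (alpha + 1) `^ alpha * tau `^ alpha.
have c_ge0 : 0 <= c by rewrite !mulr_ge0 ?powR_ge0.
apply: le_trans (_ : \sum_(n < N) c * expR (- n%:R) <= _).
  apply: ler_sum => n _.
  have decay : expR (- (n%:R * (alpha + 1))) * n.+1%:R `^ alpha <= expR (- n%:R).
    apply: le_trans (ler_wpM2l (expR_ge0 _) (powR_natS_le_expR n alpha_ge0)) _.
    by rewrite -expRD ler_expR; lra.
  rewrite !powRM ?mulr_ge0 //.
  rewrite (_ : _ * _ = c * (expR (- (n%:R * (alpha + 1))) * n.+1%:R `^ alpha)).
    exact: ler_wpM2l.
  by rewrite /c; ring.
rewrite -mulr_sumr (_ : 2 * C * _ * _ = c * 2); last by rewrite /c; ring.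
by rewrite ler_wpM2l ?sum_expRN_le2.
Qed.

End shells.

Section integral_dist.
Local Open Scope ereal_scope.
Context {d} {T : measurableType d} {R : realType} (mu : {measure set T -> \bar R}).
Variables (G : T -> R) (c : R).
Hypotheses (mG : measurable_fun setT G) (G_ge0 : forall x, (0 <= G x)%R)
  (c_ge0 : (0 <= c)%R).

Lemma ge0_integral_le_addZ (F1 F2 : T -> R) :
  measurable_fun setT F1 -> measurable_fun setT F2 ->
  (forall x, 0 <= F1 x)%R -> (forall x, 0 <= F2 x)%R ->
  {ae mu, forall x, F1 x <= F2 x + c * G x}%R ->
  \int[mu]_x (F1 x)%:E <= \int[mu]_x (F2 x)%:E + c%:E * \int[mu]_x (G x)%:E.
Proof.
move=> mF1 mF2 F1_ge0 F2_ge0 F1_le.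
have cG_ge0 x : (0 <= c * G x)%R by rewrite mulr_ge0.
have mcG : measurable_fun setT (fun x => c * G x)%R by exact: measurable_funM.
rewrite -ge0_integralZl_EFin //; last 2 first.
- by move=> x _; rewrite lee_fin.
- exact/measurable_EFinP.
under [X in _ <= _ + X]eq_integral do rewrite -EFinM.
rewrite -ge0_integralD //; last 4 first.
- by move=> x _; rewrite lee_fin.
- exact/measurable_EFinP.
- by move=> x _; rewrite lee_fin.
- exact/measurable_EFinP.
apply: ae_ge0_le_integral => //.
- by move=> x _; rewrite lee_fin.
- exact/measurable_EFinP.
- by move=> x _; rewrite -EFinD lee_fin addr_ge0.
- by apply: emeasurable_funD; exact/measurable_EFinP.
- by apply: filterS F1_le => x ? _; rewrite -EFinD lee_fin.
Qed.

Lemma abse_integral_sub_le (F1 F2 : T -> R) :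
  measurable_fun setT F1 -> measurable_fun setT F2 ->
  (forall x, 0 <= F1 x)%R -> (forall x, 0 <= F2 x)%R ->
  \int[mu]_x (F2 x)%:E \is a fin_num -> \int[mu]_x (G x)%:E \is a fin_num ->
  {ae mu, forall x, `|F1 x - F2 x| <= c * G x}%R ->
  `|\int[mu]_x (F1 x)%:E - \int[mu]_x (F2 x)%:E| <= c%:E * \int[mu]_x (G x)%:E.
Proof.
move=> mF1 mF2 F1_ge0 F2_ge0 F2_fin G_fin F12_le.
have F1_le : {ae mu, forall x, F1 x <= F2 x + c * G x}%R.
  by apply: filterS F12_le => x; exact: ler_distlDr.
have F2_le : {ae mu, forall x, F2 x <= F1 x + c * G x}%R.
  by apply: filterS F12_le => x; exact: ler_distlCDr.
have le12 := ge0_integral_le_addZ mF1 mF2 F1_ge0 F2_ge0 F1_le.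
have le21 := ge0_integral_le_addZ mF2 mF1 F2_ge0 F1_ge0 F2_le.
have F1_fin : \int[mu]_x (F1 x)%:E \is a fin_num.
  rewrite ge0_fin_numE; last by apply: integral_ge0 => x _; rewrite lee_fin.
  apply: le_lt_trans le12 _.
  by rewrite -(fineK F2_fin) -(fineK G_fin) -EFinM -EFinD ltry.
move: le12 le21; rewrite -(fineK F1_fin) -(fineK F2_fin) -(fineK G_fin).
rewrite -!EFinM -!EFinD /= !lee_fin ler_distl; lra.
Qed.

End integral_dist.

Section small_ball_moment.
Context {d} {T : measurableType d} {R : realType} (P : probability T R).

Let P_setT : ((P : {measure set T -> \bar R}) setT = 1)%E := probability_setT P.

Lemma ge0_integral_fin_num_ae_le (F : T -> R) (M : R) :
  measurable_fun setT F -> (forall x, 0 <= F x) -> {ae P, forall x, F x <= M} ->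
  (\int[P]_x (F x)%:E)%E \is a fin_num.
Proof.
move=> mF F_ge0 F_le.
rewrite ge0_fin_numE; last by apply: integral_ge0 => x _; rewrite lee_fin.
apply: (@le_lt_trans _ _ (\int[P]_x `|M|%:E)%E).
  apply: ae_ge0_le_integral => //.
  - by move=> x _; rewrite lee_fin.
  - exact/measurable_EFinP.
  - by apply: filterS F_le => x FM _; rewrite lee_fin (le_trans FM) // ler_norm.
by rewrite integral_cst // P_setT mule1 ltry.
Qed.

Lemma integral_step_fun N (c : 'I_N -> R) (S : 'I_N -> set T) (c0 : R) :
  (forall n, 0 <= c n) -> (forall n, measurable (S n)) -> 0 <= c0 ->
  (\int[P]_x (\sum_(n < N) c n * \1_(S n) x + c0)%:E =
    \sum_(n < N) (c n)%:E * P (S n) + c0%:E)%E.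
Proof.
move=> c_ge0 mS c0_ge0.
have mcS n : measurable_fun setT (fun x => c n * \1_(S n) x).
  by apply: measurable_funM => //; exact: measurable_indic.
have cS_ge0 n x : 0 <= c n * \1_(S n) x by rewrite mulr_ge0 // indicE.
under eq_integral do rewrite EFinD.
rewrite ge0_integralD //; last 2 first.
- by move=> x _; rewrite lee_fin sumr_ge0.
- by apply/measurable_EFinP; exact: measurable_sum.
rewrite integral_cst // P_setT mule1; congr (_ + _).
under eq_integral do rewrite -sumEFin.
rewrite ge0_integral_sum //; last 2 first.
- by move=> n; exact/measurable_EFinP.
- by move=> n x _; rewrite lee_fin.
apply: eq_bigr => n _; under eq_integral do rewrite EFinM.
rewrite ge0_integralZl_EFin //; last exact/measurable_EFinP/measurable_indic.
by rewrite integral_indic // setIT.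
Qed.

Variables (D : T -> R) (C alpha : R).
Hypotheses (mD : measurable_fun setT D) (D_ge0 : forall x, 0 <= D x)
  (C_ge0 : 0 <= C) (alpha_gt0 : 0 < alpha).
Hypothesis D_tail : forall t, 0 < t ->
  (P [set x | (D x <= t)%R] <= (C * t `^ alpha)%:E)%E.

Lemma integral_expR_small_ball_le tau : 0 < tau ->
  (\int[P]_x (expR (- D x / tau))%:E <=
    ((2 * C * (alpha + 1) `^ alpha + 1) * tau `^ alpha)%:E)%E.
Proof.
move=> tau_gt0; set w := alpha + 1.
have w_gt0 : 0 < w := addr_gt0 alpha_gt0 ltr01.
have u_gt0 : 0 < tau `^ alpha by exact: powR_gt0.
have [N N_gt] : exists N : nat, (tau `^ alpha)^-1 < N%:R.
  by exists (Num.Def.archi_bound (tau `^ alpha)^-1); rewrite archi_boundP // invr_ge0 ltW.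
have expRN_le : expR (- (N%:R * w)) <= tau `^ alpha.
  rewrite expRN -[tau `^ alpha]invrK lef_pV2 ?posrE ?expR_gt0 ?invr_gt0 //.
  apply: le_trans (ltW N_gt) (le_trans _ (expR_ge1Dx _)).
  have := mulr_ge0 (ler0n R N) (ltW alpha_gt0); rewrite /w; lra.
set S := fun n : 'I_N => [set x | D x <= n.+1%:R * w * tau].
have mS n : measurable (S n).
  have := mD measurableT (measurable_itv `]-oo, n.+1%:R * w * tau]%R).
  by rewrite setTI; congr measurable; apply/seteqP; split => x; rewrite /= in_itv.
have le_shells : (\int[P]_x (expR (- D x / tau))%:E <= \int[P]_x
    (\sum_(n < N) expR (- (n%:R * w)) * \1_(S n) x + expR (- (N%:R * w)))%:E)%E.
  apply: ge0_le_integral => //.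
  - apply/measurable_EFinP; apply: measurableT_comp => //.
    by apply: measurable_funM => //; exact: measurableT_comp.
  - apply/measurable_EFinP; apply: measurable_funD => //.
    by apply: measurable_sum => n; apply: measurable_funM => //; exact: measurable_indic.
  - move=> x _; rewrite lee_fin; apply: le_trans (expRN_le_shells w N tau_gt0 (D_ge0 x)) _.
    rewrite lerD2r; apply: ler_sum => n _; rewrite indicE.
    by case: (boolP (D x <= _)) => Dx; [rewrite mem_set | rewrite memNset //; apply/negP].
apply: le_trans le_shells _.
rewrite integral_step_fun //.
apply: (@le_trans _ _ ((\sum_(n < N) expR (- (n%:R * w)) *
    (C * (n.+1%:R * w * tau) `^ alpha) + expR (- (N%:R * w)))%:E)).
  rewrite EFinD -sumEFin leeD2r // lee_sum // => n _.
  by rewrite EFinM lee_wpmul2l ?lee_fin ?expR_ge0 // D_tail // !mulr_gt0.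
rewrite lee_fin mulrDl mul1r lerD //.
by rewrite shell_sum_le // ltW.
Qed.

End small_ball_moment.

Section predictors.
Context {dX} {Xs : measurableType dX} {R : realType} {K : nat} {Theta Phi : Type}.
Variables (f : 'I_K -> Theta -> Xs -> R) (a : 'I_K -> Phi -> Xs -> R).
Variables (theta : 'I_K -> Theta) (phi : Phi) (Bf : R).
Hypotheses (K_gt0 : (0 < K)%N) (f_le : forall k th x, `|f k th x| <= Bf).
Hypotheses (mf : forall k th, measurable_fun setT (f k th))
  (ma : forall k ph, measurable_fun setT (a k ph)).

Lemma norm_soft_pred_le tau x : `|soft_pred f a tau theta phi x| <= Bf.
Proof. exact: norm_softmax_comb_le (Ordinal K_gt0) _. Qed.

Lemma norm_hard_pred_le x : `|hard_pred f a theta phi x| <= Bf.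
Proof.
by have [ks E] := hard_winner_exists (fun j => a j phi x) K_gt0; rewrite /hard_pred E.
Qed.

Lemma dist_soft_hard_pred_le tau x : 0 < tau ->
  `|soft_pred f a tau theta phi x - hard_pred f a theta phi x|
    <= K%:R * (2 * Bf) * expR (- margin a phi x / tau).
Proof.
move=> tau_gt0; have [ks E] := hard_winner_exists (fun j => a j phi x) K_gt0.
by rewrite /hard_pred E; exact: dist_soft_hard_le.
Qed.

Lemma measurable_margin : measurable_fun setT (margin a phi).
Proof. exact: measurable_top_margin. Qed.

Lemma measurable_soft_pred tau : measurable_fun setT (soft_pred f a tau theta phi).
Proof.
apply: measurable_sum => k; apply: measurable_funM => //.
exact: measurable_softmax.
Qed.

Lemma measurable_hard_pred : measurable_fun setT (hard_pred f a theta phi).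
Proof. exact: measurable_hard_select. Qed.

End predictors.

Lemma dist_sqr_sub_le (R : realType) (By B y u v : R) :
  `|y| <= By -> `|u| <= B -> `|v| <= B ->
  `|(y - u) ^+ 2 - (y - v) ^+ 2| <= (2 * By + 2 * B) * `|u - v|.
Proof.
move=> y_le u_le v_le.
have -> : (y - u) ^+ 2 - (y - v) ^+ 2 = (u + v - 2 * y) * (u - v) by ring.
rewrite normrM; apply: ler_wpM2r => //.
by move: y_le u_le v_le; rewrite !ler_norml; lra.
Qed.

Section sq_risk.
Context {d} {T : measurableType d} {R : realType} (P : probability T R).
Context {dX} {Xs : measurableType dX}.
Variables (X : T -> Xs) (Y : T -> R) (BY Bh : R).
Hypotheses (mX : measurable_fun setT X) (mY : measurable_fun setT Y)
  (Y_le : {ae P, forall w, `|Y w| <= BY}) (BY_ge0 : 0 <= BY) (Bh_ge0 : 0 <= Bh).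

Lemma measurable_sq_loss (h : Xs -> R) : measurable_fun setT h ->
  measurable_fun setT (fun w => (Y w - h (X w)) ^+ 2).
Proof.
by move=> mh; apply/measurable_funX/measurable_funB => //; exact: measurableT_comp.
Qed.

Lemma sq_risk_fin_num (h : Xs -> R) : measurable_fun setT h ->
  (forall x, `|h x| <= Bh) -> sq_risk P X Y h \is a fin_num.
Proof.
move=> mh h_le; apply: (ge0_integral_fin_num_ae_le (M := (BY + Bh) ^+ 2)).
- exact: measurable_sq_loss.
- by move=> w; exact: sqr_ge0.
- apply: filterS Y_le => w; move: (h_le (X w)).
  by rewrite !ler_norml; nra.
Qed.

Lemma dist_sq_risk_le (h1 h2 : Xs -> R) (G : T -> R) (c : R) :
  measurable_fun setT h1 -> measurable_fun setT h2 -> measurable_fun setT G ->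
  (forall x, `|h1 x| <= Bh) -> (forall x, `|h2 x| <= Bh) ->
  (forall w, 0 <= G w) -> 0 <= c -> (\int[P]_w (G w)%:E)%E \is a fin_num ->
  (forall w, `|h1 (X w) - h2 (X w)| <= c * G w) ->
  (`|sq_risk P X Y h1 - sq_risk P X Y h2| <=
    ((2 * BY + 2 * Bh) * c)%:E * \int[P]_w (G w)%:E)%E.
Proof.
move=> mh1 mh2 mG h1_le h2_le G_ge0 c_ge0 G_fin h12_le.
apply: abse_integral_sub_le => //.
- by rewrite mulr_ge0 ?addr_ge0 ?mulr_ge0.
- exact: measurable_sq_loss.
- exact: measurable_sq_loss.
- by move=> w; exact: sqr_ge0.
- by move=> w; exact: sqr_ge0.
- exact: sq_risk_fin_num.
apply: filterS Y_le => w Yw_le.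
apply: le_trans (dist_sqr_sub_le Yw_le (h1_le _) (h2_le _)) _.
by rewrite -mulrA ler_wpM2l ?addr_ge0 ?mulr_ge0.
Qed.

End sq_risk.

Theorem mainTheorem1 (R : realType) (K : nat) (hK : (2 <= K)%N)
  (Cmt alpha BY Bf : R) (hCmt : 0 < Cmt) (halpha : 0 < alpha)
  (hBY : 0 < BY) (hBf : 0 < Bf) :
  exists Csh : R, 0 < Csh /\
  forall (dT : measure_display) (T : measurableType dT) (P : probability T R)
    (dX : measure_display) (Xs : measurableType dX)
    (X : T -> Xs) (Y : T -> R) (Theta Phi : Type)
    (f : 'I_K -> Theta -> Xs -> R) (a : 'I_K -> Phi -> Xs -> R),
    measurable_fun setT X -> measurable_fun setT Y ->
    (forall k th, measurable_fun setT (f k th)) ->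
    (forall k ph, measurable_fun setT (a k ph)) ->
    (* (i) uniform margin tail *)
    (forall (ph : Phi) (t : R), 0 < t ->
       (P [set w | (margin a ph (X w) <= t)%R] <= (Cmt * t `^ alpha)%:E)%E) ->
    (* (ii) uniform boundedness *)
    {ae P, forall w, `|Y w| <= BY} ->
    (forall k th x, `|f k th x| <= Bf) ->
    forall (tau : R), 0 < tau -> tau <= 1 ->
    forall (theta : 'I_K -> Theta) (phi : Phi),
      (`| sq_risk P X Y (soft_pred f a tau theta phi)
          - sq_risk P X Y (hard_pred f a theta phi) | <= (Csh * tau `^ alpha)%:E)%E.
Proof.
have K_gt0 : (0 < K)%N by apply: leq_trans hK.
set c := (2 * BY + 2 * Bf) * (K%:R * (2 * Bf)).
have c_gt0 : 0 < c.
  by apply: mulr_gt0; [lra | apply: mulr_gt0; [rewrite ltr0n | lra]].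
exists (c * (2 * Cmt * (alpha + 1) `^ alpha + 1)); split.
  by rewrite mulr_gt0 // ltr_pwDr ?ltr01 // !mulr_ge0 ?powR_ge0 // ltW.
move=> dT T P dX Xs X Y Theta Phi f a mX mY mf ma tail Y_le f_le tau tau_gt0 _ theta phi.
set D := fun w => margin a phi (X w).
have mD : measurable_fun setT D by exact: measurableT_comp (measurable_margin phi ma) mX.
have mG : measurable_fun setT (fun w => expR (- D w / tau)).
  by apply: measurableT_comp => //; apply: measurable_funM => //; exact: measurableT_comp.
have moment := integral_expR_small_ball_le mD (fun w => top_margin_ge0 _) (ltW hCmt)
  halpha (tail phi) tau_gt0.
have G_fin : (\int[P]_w (expR (- D w / tau))%:E)%E \is a fin_num.
  rewrite ge0_fin_numE ?(le_lt_trans moment) ?ltry //.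
  by apply: integral_ge0 => w _; rewrite lee_fin expR_ge0.
apply: le_trans (dist_sq_risk_le mX mY Y_le (ltW hBY) (ltW hBf)
  (measurable_soft_pred theta phi mf ma tau) (measurable_hard_pred theta phi mf ma) mG
  (norm_soft_pred_le a theta phi K_gt0 f_le tau) (norm_hard_pred_le a theta phi K_gt0 f_le)
  (fun w => expR_ge0 _) _ G_fin (fun w => dist_soft_hard_pred_le _ _ _ K_gt0 f_le _ tau_gt0)) _.
  by rewrite mulr_ge0 ?ler0n ?mulr_ge0 // ltW.
rewrite -/c -[c * _ * _]mulrA [X in (_ <= X)%E]EFinM.
by apply: lee_wpmul2l => //; rewrite lee_fin ltW.
Qed.
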